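(* There is an absolute constant $c>0$ such that for all integers $n>f\ge 1$ there exists an $n$-vertex graph $G^*=(V,E)$ such that every $f$-EFD connectivity certificate $H$ of $G^*$ has at least $c\, f n \log(n/f)$ edges.
   Context: For a graph $G=(V,E)$ and a set of edges $F\subseteq E$, $\deg(F)$ denotes the maximum over vertices $x$ of the number of edges of $F$ incident to $x$. A subgraph $H\subseteq G$ (on the same vertex set) is an $f$-EFD connectivity certificate of $G$ if for every $F\subseteq E$ with $\deg(F)\le f$ and every pair $u,v\in V$, $u$ and $v$ are connected in $H-F$ if and only if they are connected in $G-F$ (where $G-F$ is $G$ with the edges of $F$ removed). *)

From mathcomp Require Import all_boot.
From Stdlib Require Import Reals.
Set Implicit Arguments. Unset Strict Implicit. Unset Printing Implicit Defensive.

Definition simple_graph (n : nat) (E : {set {set 'I_n}}) : Prop :=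
  forall e, e \in E -> #|e| = 2.

Definition degF (n : nat) (F : {set {set 'I_n}}) : nat :=
  \max_(x : 'I_n) #|[set e in F | x \in e]|.

Definition adj_minus (n : nat) (E F : {set {set 'I_n}}) : rel 'I_n :=
  fun x y => [set x; y] \in E :\: F.

Definition connected_minus (n : nat) (E F : {set {set 'I_n}}) (u v : 'I_n) : bool :=
  connect (adj_minus E F) u v.

Definition EFD_certificate (n f : nat) (E H : {set {set 'I_n}}) : Prop :=
  H \subset E /\
  forall F : {set {set 'I_n}}, F \subset E -> degF F <= f ->
    forall u v : 'I_n, connected_minus H F u v = connected_minus E F u v.

From mathcomp Require Import all_boot zify.
Set Implicit Arguments. Unset Strict Implicit. Unset Printing Implicit Defensive.

(* Blow up the d-dimensional hypercube: replace each vertex by k copies and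
   each edge by a complete bipartite graph K_{k,k}.  For an edge e in
   direction i, deleting the other direction-i edges is a fault set of degree
   at most k, after which e is the only edge crossing the cut between the two
   halves {t_i = 0} and {t_i = 1} of the cube.  Hence for k <= f every f-EFD
   certificate keeps all d 2^(d-1) k^2 edges.  Taking k = f and 2^d about n/f
   gives the bound f n log(n/f) up to a constant; when n < 2f take d = 1 and
   k = n/2. *)

Lemma set2_asym_inj (T : finType) (r : rel T) (p q p' q' : T) :
  (forall x y, r x y -> ~~ r y x) -> r p q -> r p' q' ->
  [set p; q] = [set p'; q'] -> (p, q) = (p', q').
Proof.
move=> asym rpq rpq' epq.
have neq x y : r x y -> x != y.
  by move=> rxy; apply: contraTneq rxy => ->; apply/negP => ryy; case/negP: (asym _ _ ryy).
have mem2 x : x \in [set p; q] -> x = p' \/ x = q' by rewrite epq => /set2P.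
case: (mem2 p (set21 p q)) => [epp' | epq'].
  case: (mem2 q (set22 p q)) => [eqp' | ->]; last by rewrite epp'.
  by case/eqP: (neq _ _ rpq); rewrite epp' eqp'.
case: (mem2 q (set22 p q)) => [eqp' | eqq'].
  by move: (asym _ _ rpq'); rewrite -eqp' -epq' rpq.
by case/eqP: (neq _ _ rpq); rewrite epq' eqq'.
Qed.

Lemma degF_subset (n : nat) (F F' : {set {set 'I_n}}) :
  F \subset F' -> degF F <= degF F'.
Proof.
move=> sFF'; apply/bigmax_leqP => x _; apply: leq_trans (leq_bigmax x).
by apply/subset_leq_card/subsetP => e; rewrite !inE => /andP[/(subsetP sFF') -> ->].
Qed.

Lemma certificate_mem_bridge (n f : nat) (E H F : {set {set 'I_n}})
    (Q : pred 'I_n) (u v : 'I_n) :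
  EFD_certificate f E H -> F \subset E -> degF F <= f ->
  [set u; v] \in E :\: F -> Q u != Q v ->
  (forall x y, [set x; y] \in (E :\: F) :\ [set u; v] -> Q x = Q y) ->
  [set u; v] \in H.
Proof.
move=> [sHE certH] sFE degF_le uvE Quv Qcut; apply: contraNT Quv => uvNH.
have Qclosed : closed (adj_minus H F) Q.
  move=> x y; rewrite /adj_minus => xyH; apply: Qcut.
  rewrite !inE; case/setDP: xyH => xyH ->; rewrite (subsetP sHE _ xyH) !andbT.
  by apply: contraNneq uvNH => <-.
rewrite -/(Q \in _) in Qclosed *.
apply/eqP/(closed_connect Qclosed).
by rewrite [connect _ _ _](certH F sFE degF_le) /connected_minus connect1.
Qed.

Section BlownUpCube.
Variables (n d k : nat).
Hypothesis cube_fits : 2 ^ d * k <= n.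

Definition cube := {ffun 'I_d -> bool}.
Definition vertex := (cube * 'I_k)%type.

Lemma card_vertex_le : #|{: vertex}| <= n.
Proof. by rewrite card_prod card_ffun card_bool !card_ord. Qed.

Definition embed (v : vertex) : 'I_n := widen_ord card_vertex_le (enum_rank v).

Lemma embed_inj : injective embed.
Proof. by move=> v w /(congr1 val) /= /val_inj /enum_rank_inj. Qed.

Definition flip (i : 'I_d) (t : cube) : cube :=
  [ffun j => if j == i then ~~ t j else t j].

Lemma flipK i : involutive (flip i).
Proof. by move=> t; apply/ffunP => j; rewrite !ffunE; case: eqP => // ->; rewrite negbK. Qed.

Lemma flip_id i t : flip i t i = ~~ t i.
Proof. by rewrite ffunE eqxx. Qed.

Lemma flip_ne i j t : j != i -> flip i t j = t j.
Proof. by rewrite ffunE => /negPf ->. Qed.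

Lemma flip_neq i t : t != flip i t.
Proof. by apply/eqP => /(congr1 (fun u : cube => u i)); rewrite flip_id; case: (t i). Qed.

(* The code (i, t, a, b), with t i = false, stands for the edge joining copy a
   of the cube vertex t to copy b of its neighbour flip i t. *)
Definition code := ('I_d * cube * 'I_k * 'I_k)%type.

Definition dir (x : code) : 'I_d := x.1.1.1.
Definition base (x : code) : cube := x.1.1.2.
Definition lo (x : code) : vertex := (base x, x.1.2).
Definition hi (x : code) : vertex := (flip (dir x) (base x), x.2).

Definition codes : {set code} := [set x | ~~ base x (dir x)].

Definition edge_of (x : code) : {set 'I_n} := [set embed (lo x); embed (hi x)].

Definition cube_graph : {set {set 'I_n}} := edge_of @: codes.

Definition dir_class (i : 'I_d) : {set {set 'I_n}} :=
  edge_of @: [set x in codes | dir x == i].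

Lemma cube_graph_simple : simple_graph cube_graph.
Proof.
move=> _ /imsetP[x _ ->]; rewrite cards2 (inj_eq embed_inj).
suff -> : lo x != hi x by [].
by apply: contraNneq (flip_neq (dir x) (base x)) => /(congr1 fst) /eqP.
Qed.

Definition cube_lt (v w : vertex) : bool :=
  (v.1 != w.1) && [forall j, v.1 j ==> w.1 j].

Lemma cube_lt_asym v w : cube_lt v w -> ~~ cube_lt w v.
Proof.
case/andP=> /eqP neq /forallP vw; apply/andP => -[_ /forallP wv].
by apply: neq; apply/ffunP => j; move: (vw j) (wv j); case: (v.1 j); case: (w.1 j).
Qed.

Lemma cube_lt_lo_hi x : x \in codes -> cube_lt (lo x) (hi x).
Proof.
rewrite inE => tNi; apply/andP; split; first exact: flip_neq.
apply/forallP => j /=; case: (eqVneq j (dir x)) => [-> | nj].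
  by rewrite (negPf tNi).
by rewrite flip_ne // implybb.
Qed.

Lemma edge_of_inj : {in codes &, injective edge_of}.
Proof.
move=> x y xc yc exy.
have lohi : [set lo x; hi x] = [set lo y; hi y].
  by apply: (imset_inj embed_inj); rewrite !imsetU1 !imset_set1.
case: (set2_asym_inj cube_lt_asym (cube_lt_lo_hi xc) (cube_lt_lo_hi yc) lohi).
move: x y xc {yc exy lohi} => [[[i t] a] b] [[[j s] a'] b'].
rewrite inE /lo /hi /dir /base /= => ti <- <- eflip <-.
case: (eqVneq i j) => [-> // | nij].
move: eflip => /(congr1 (fun u : cube => u i)).
by rewrite flip_id flip_ne // (negPf ti).
Qed.

Definition toggle (x : code) : code := (dir x, flip (dir x) (base x), x.1.2, x.2).

Lemma toggleK : involutive toggle.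
Proof. by case=> [[[i t] a] b]; rewrite /toggle /dir /base /= flipK. Qed.

Lemma card_cube_graph : d * 2 ^ d * k * k <= 2 * #|cube_graph|.
Proof.
have -> : d * 2 ^ d * k * k = #|{: code}|.
  by rewrite !card_prod card_ffun card_bool !card_ord.
rewrite card_in_imset; last exact: edge_of_inj.
rewrite -(cardsC codes) mul2n -addnn leq_add2l.
rewrite -(card_imset (~: codes) (inv_inj toggleK)); apply/subset_leq_card/subsetP.
by move=> _ /imsetP[x xNc ->]; move: xNc; rewrite !inE /toggle /dir /base /= flip_id.
Qed.

Lemma degF_dir_class i : degF (dir_class i) <= k.
Proof.
apply/bigmax_leqP => z _.
case: (pickP (fun v : vertex => embed v == z)) => [[s c] /eqP <- | zNembed].
  apply: (@leq_trans #|[set [set embed (s, c); embed (flip i s, b)] | b : 'I_k]|).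
    2: by rewrite -[X in _ <= X](card_ord k) leq_imset_card.
  apply/subset_leq_card/subsetP => e; rewrite !inE => /andP[/imsetP[x + ->]].
  move: x => [[[j t] a] b]; rewrite !inE /lo /hi /dir /base /= => /andP[_ /eqP ->].
  case/orP=> /eqP /embed_inj [-> ->]; first exact: imset_f.
  by apply/imsetP; exists a; rewrite // flipK setUC.
suff -> : [set e in dir_class i | z \in e] = set0 by rewrite cards0.
apply/setP => e; rewrite !inE; apply/negbTE/andP => -[/imsetP[x _ ->]].
by case/set2P=> /esym /eqP; rewrite zNembed.
Qed.

Definition side (i : 'I_d) (z : 'I_n) : bool := z \in embed @: [set v : vertex | v.1 i].

Lemma side_embed i v : side i (embed v) = v.1 i.
Proof. by rewrite /side mem_imset ?inE //; apply: embed_inj. Qed.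

Lemma side_edge_of i x z : dir x != i -> z \in edge_of x -> side i z = base x i.
Proof. by move=> nxi /set2P[] ->; rewrite side_embed //= flip_ne // eq_sym. Qed.

Lemma cube_graph_sub_certificate f H :
  k <= f -> EFD_certificate f cube_graph H -> cube_graph \subset H.
Proof.
move=> kf certH; apply/subsetP => _ /imsetP[x xc ->].
pose F := dir_class (dir x) :\ edge_of x.
have sFE : F \subset cube_graph.
  apply: subset_trans (subD1set _ _) (imsetS _ _).
  by apply/subsetP => y; rewrite inE => /andP[].
have degF_le : degF F <= f.
  exact: leq_trans (degF_subset (subD1set _ _)) (leq_trans (degF_dir_class _) kf).
apply: (certificate_mem_bridge (Q := side (dir x)) certH sFE degF_le).
- by rewrite !inE eqxx /=; apply: imset_f.
- by move: xc; rewrite inE !side_embed /= flip_id; case: (base x _).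
move=> y z /setD1P[neq /setDP[/imsetP[x' x'c exyz] yzNF]].
have nx' : dir x' != dir x.
  apply: contraNneq yzNF => ex'; rewrite !inE neq exyz imset_f //.
  by rewrite inE x'c ex' eqxx.
rewrite (side_edge_of nx' (_ : y \in edge_of x')) -?exyz ?set21 //.
by rewrite (side_edge_of nx' (_ : z \in edge_of x')) -?exyz ?set22.
Qed.

Lemma cube_graph_certificate_card f H :
  k <= f -> EFD_certificate f cube_graph H -> d * 2 ^ d * k * k <= 2 * #|H|.
Proof.
move=> kf certH; apply: leq_trans card_cube_graph _.
by rewrite leq_mul2l subset_leq_card ?orbT // (cube_graph_sub_certificate kf certH).
Qed.

End BlownUpCube.

Lemma blown_up_cube_certificate_card (n f d k : nat) :
  k <= f -> 2 ^ d * k <= n ->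
  exists E : {set {set 'I_n}}, simple_graph E /\
    forall H, EFD_certificate f E H -> d * 2 ^ d * k * k <= 2 * #|H|.
Proof.
move=> kf fits; exists (cube_graph fits); split; first exact: cube_graph_simple.
by move=> H; apply: cube_graph_certificate_card.
Qed.

Lemma certificate_lower_bound_nat (n f : nat) : 0 < f -> f < n ->
  exists d (E : {set {set 'I_n}}), n < 2 ^ d.+1 * f /\ simple_graph E /\
    forall H, EFD_certificate f E H -> f * n * d.+1 <= 16 * #|H|.
Proof.
move=> f_gt0 f_lt_n; case: (leqP (2 * f) n) => [two_f_le | n_lt_two_f].
  pose d := trunc_log 2 (n %/ f).
  have ratio_ge2 : 2 <= n %/ f by rewrite leq_divRL // mulnC.
  have d_gt0 : 0 < d by rewrite trunc_log_gt0.
  have fits : 2 ^ d * f <= n.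
    apply: leq_trans (leq_divM n f); rewrite leq_mul2r trunc_logP ?orbT //.
    exact: leq_trans ratio_ge2.
  have n_lt : n < 2 ^ d.+1 * f.
    apply: leq_trans (ltn_ceil n f_gt0) _.
    by rewrite leq_mul2r trunc_log_ltn ?orbT.
  have [E [simpleE cardE]] := blown_up_cube_certificate_card (leqnn f) fits.
  exists d, E; split=> //; split=> // H /cardE.
  have : f * n * d.+1 <= f * (2 ^ d.+1 * f) * (2 * d).
    by apply: leq_mul; [rewrite leq_mul2l ltnW ?orbT | lia].
  rewrite expnS; lia.
have [E [simpleE cardE]] :=
  @blown_up_cube_certificate_card n f 1 (n %/ 2) ltac:(lia) ltac:(rewrite expn1; lia).
exists 0, E; split; first by rewrite expn1.
split=> // H /cardE; rewrite expn1 => cardH.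
have : f * n <= 3 * (n %/ 2) * (3 * (n %/ 2)) by apply: leq_mul; lia.
lia.
Qed.

(* Imported only now: Reals rebinds [^] on nat to [Nat.pow], which the ssrnat
   lemmas about [expn] used above do not recognise. *)
From Stdlib Require Import Reals Lra.

Lemma INR_expn (m d : nat) : INR (expn m d) = (INR m ^ d)%R.
Proof. by elim: d => // d IHd; rewrite expnS mult_INR IHd. Qed.

Lemma ln2_lt1 : (ln 2 < 1)%R.
Proof.
rewrite -[X in (_ < X)%R]ln_exp; apply: ln_increasing; first lra.
by have := exp_ineq1 1; lra.
Qed.

Lemma ln_ratio_lt (x y : R) (d : nat) :
  (0 < x)%R -> (0 < y)%R -> (x < 2 ^ d.+1 * y)%R -> (ln (x / y) < INR d.+1)%R.
Proof.
move=> x_gt0 y_gt0 x_lt.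
have ratio_lt : (x / y < 2 ^ d.+1)%R.
  apply: (Rmult_lt_reg_r y) => //.
  by rewrite /Rdiv Rmult_assoc Rinv_l ?Rmult_1_r //; lra.
apply: (Rlt_le_trans _ (ln (2 ^ d.+1))).
  by apply: ln_increasing => //; apply: Rdiv_lt_0_compat.
rewrite ln_pow; last lra.
have := ln2_lt1; have := pos_INR d.+1; nra.
Qed.

Theorem mainTheorem2 :
  exists c : R, (0 < c)%R /\
    forall n f : nat, (1 <= f)%N -> (f < n)%N ->
      exists E : {set {set 'I_n}}, simple_graph E /\
        forall H : {set {set 'I_n}}, EFD_certificate f E H ->
          (c * INR f * INR n * ln (INR n / INR f) <= INR #|H|)%R.
Proof.
exists (1 / 16)%R; split; first lra.
move=> n f f_gt0 f_lt_n.
have [d [E [n_lt [simpleE cardE]]]] := certificate_lower_bound_nat f_gt0 f_lt_n.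
exists E; split=> // H /cardE /leP /le_INR; rewrite !mult_INR => cardH.
have f_gt0R : (0 < INR f)%R by apply/lt_0_INR/ltP.
have n_gt0R : (0 < INR n)%R by apply/lt_0_INR/ltP/(ltn_trans f_gt0).
have n_ltR : (INR n < 2 ^ d.+1 * INR f)%R.
  have INR2 : INR 2 = 2%R by rewrite /=; lra.
  by move/ltP/lt_INR: n_lt; rewrite mult_INR INR_expn INR2.
have ln_lt := ln_ratio_lt n_gt0R f_gt0R n_ltR.
have fn_ge0 : (0 <= INR f * INR n)%R by apply: Rmult_le_pos; apply: pos_INR.
have := Rmult_le_compat_l _ _ _ fn_ge0 (Rlt_le _ _ ln_lt).
move: cardH; rewrite [INR 16]/=; lra.
Qed.
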